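(* Let $n\geq 5$ and let $P=(Y,X,Z)$ be a path of length two in $AQ_n$ (so $Y\ne Z$ are both adjacent to $X$). Then $|N_{AQ_n}(P)|\geq 6n-17$ and $|N_{AQ_n}(X)\cap N_{AQ_n}(Y)\cap N_{AQ_n}(Z)|\leq 1$. Furthermore, if $Z=\overline{X}_n$, then $|N_{AQ_n}(P)|\geq 6n-15$.
   Context: The $n$-dimensional augmented cube $AQ_n$ has vertex set $\{0,1\}^n$, vertices written as strings $X=x_nx_{n-1}\cdots x_1$. For $1\le i\le n$ let $X_i=x_n\cdots x_{i+1}\bar x_i x_{i-1}\cdots x_1$ (flip bit $i$) and $\overline{X}_i=x_n\cdots x_{i+1}\bar x_i\bar x_{i-1}\cdots\bar x_1$ (flip bits $i,\dots,1$), where $\bar x=1-x$. Two distinct vertices $X,Y$ are adjacent iff $Y=X_i$ for some $1\le i\le n$ or $Y=\overline{X}_i$ for some $2\le i\le n$. $N_{AQ_n}(V)$ is the neighbor set of a vertex $V$; for a subgraph $T$, $N_{AQ_n}(T)=\bigcup_{U\in V(T)}N_{AQ_n}(U)\setminus V(T)$. *)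

From mathcomp Require Import all_boot.
Set Implicit Arguments. Unset Strict Implicit. Unset Printing Implicit Defensive.

(* Vertices of AQ_n: binary strings x_n ... x_1, encoded as finite functions
   'I_n -> bool where index k : 'I_n holds bit x_(k+1). *)
Definition vert (n : nat) := {ffun 'I_n -> bool}.

Definition flip1 n (X : vert n) (i : nat) : vert n :=
  [ffun k : 'I_n => if k.+1 == i then ~~ X k else X k].

Definition flipL n (X : vert n) (i : nat) : vert n :=
  [ffun k : 'I_n => if k.+1 <= i then ~~ X k else X k].

Definition aq_adj n (X Y : vert n) : bool :=
  (X != Y) &&
  ([exists i : 'I_n.+1, (1 <= i) && (Y == flip1 X i)] ||
   [exists i : 'I_n.+1, (2 <= i) && (Y == flipL X i)]).

Definition nbr n (V : vert n) : {set vert n} := [set U | aq_adj V U].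

Definition nbrS n (T : {set vert n}) : {set vert n} :=
  (\bigcup_(U in T) nbr U) :\: T.

From mathcomp Require Import all_boot zify.
Set Implicit Arguments. Unset Strict Implicit. Unset Printing Implicit Defensive.

(* Encode a vertex v by the set [jumps v] of positions k where bits k and k+1
   of v differ (bit n being read as 0). This is a bijection onto the subsets
   of 'I_n that turns xor into symmetric difference, and it sends the moves
   X -> X_1, X -> X_i (i >= 2) and X -> overline X_i to the moves by {0},
   {i-2, i-1} and {i-1}. So AQ_n is the Cayley graph of the subsets of 'I_n
   under symmetric difference, generated by the 2n-1 nonempty sets of
   diameter at most one ([gens]).
   Translating X to the empty set, with a, b the images of Y and Z, the
   inclusion-exclusion principle gives
     |N(P)| >= 3(2n-1) - 3 - c(a) - c(b) - c(a+b) + t,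
   where c(x) counts the common neighbours of 0 and x, and t those of 0, a, b.
   Now c(x) <= 4 for every x != 0, c(x) <= 2 when x is a pair, an end
   singleton, or two singletons at distance other than 2, and two singletons
   at distance 2 have the singleton between them as a common neighbour with 0.
   Hence c(a) + c(b) + c(a+b) <= 11 + t, and <= 9 + t when b = {n-1}, that is
   when Z = overline X_n. The common neighbours of 0, a, b are pinned down by
   the explicit adjacency between generators, leaving at most one. *)

Section SymDiff.
Variable T : finType.
Implicit Types A B C : {set T}.

Definition symdiff A B : {set T} := [set x | (x \in A) != (x \in B)].

Lemma in_symdiff A B x : (x \in symdiff A B) = ((x \in A) != (x \in B)).
Proof. by rewrite inE. Qed.

Lemma symdiffC A B : symdiff A B = symdiff B A.
Proof. by apply/setP=> x; rewrite !in_symdiff eq_sym. Qed.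

Lemma symdiffA A B C : symdiff A (symdiff B C) = symdiff (symdiff A B) C.
Proof.
by apply/setP=> x; rewrite !in_symdiff; case: (x \in A) (x \in B) (x \in C) => [] [] [].
Qed.

Lemma symdiffv A : symdiff A A = set0.
Proof. by apply/setP=> x; rewrite in_symdiff in_set0 eqxx. Qed.

Lemma symdiff0s A : symdiff set0 A = A.
Proof. by apply/setP=> x; rewrite in_symdiff in_set0; case: (x \in A). Qed.

Lemma symdiffKV A B : symdiff A (symdiff A B) = B.
Proof. by rewrite symdiffA symdiffv symdiff0s. Qed.

Lemma symdiff_inj A : injective (symdiff A).
Proof. exact: can_inj (symdiffKV A). Qed.

Lemma symdiff_translate A B C : symdiff (symdiff C A) (symdiff C B) = symdiff A B.
Proof.
by apply/setP=> x; rewrite !in_symdiff; case: (x \in A) (x \in B) (x \in C) => [] [] [].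
Qed.

Lemma symdiff_eq0 A B : (symdiff A B == set0) = (A == B).
Proof. by rewrite -[A == B](inj_eq (@symdiff_inj A)) symdiffv eq_sym. Qed.

End SymDiff.

Lemma cardsU3 (T : finType) (A B C : {set T}) :
  #|A :|: B :|: C| + #|A :&: B| + #|B :&: C| + #|A :&: C| =
  #|A| + #|B| + #|C| + #|A :&: B :&: C|.
Proof.
have := cardsUI (A :|: B) C; have := cardsUI A B; have := cardsUI (A :&: C) (B :&: C).
by rewrite setIUl -setIIl; lia.
Qed.

Lemma card_bij_eq (aT rT : finType) (f : aT -> rT) (A : {set aT}) (B : {set rT}) :
  bijective f -> (forall x, (x \in A) = (f x \in B)) -> #|A| = #|B|.
Proof.
move=> fbij AB; rewrite -(on_card_preimset (onW_bij _ fbij)).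
by apply: eq_card => x; rewrite inE AB.
Qed.

Lemma card_le_size (T : finType) (A : {set T}) (s : seq T) :
  {subset A <= s} -> #|A| <= size s.
Proof. by move=> As; apply: leq_trans (card_size s); apply/subset_leq_card/subsetP. Qed.

Section Segments.
Variable n : nat.

(* The differences of adjacent vertices, seen through [jumps]. *)
Definition gens : {set {set 'I_n}} :=
  [set s : {set 'I_n} | (s != set0) && [forall x in s, forall y in s, (x : nat) <= y.+1]].

Definition seg (r : nat) (w : bool) : {set 'I_n} := [set x : 'I_n | r <= x <= r + w].

Lemma in_seg r w (x : 'I_n) : (x \in seg r w) = (r <= x <= r + w).
Proof. by rewrite inE. Qed.

Lemma gensP (s : {set 'I_n}) :
  reflect ((exists x, x \in s) /\ forall x y, x \in s -> y \in s -> (x : nat) <= y.+1)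
          (s \in gens).
Proof.
rewrite inE; apply: (iffP andP) => [[/set0Pn s0 /forall_inP sp]|[/set0Pn s0 sp]].
  by split=> // x y xs ys; apply: (forall_inP (sp x xs)).
by split=> //; apply/forall_inP=> x xs; apply/forall_inP=> y ys; apply: sp.
Qed.

Lemma set0_gens : set0 \notin gens.
Proof. by apply/gensP=> -[[x]]; rewrite in_set0. Qed.

Lemma gens_spread (s : {set 'I_n}) : s \in gens ->
  forall i j (hi : i < n) (hj : j < n),
  (Ordinal hi \in s) ==> (Ordinal hj \in s) ==> (i <= j.+1).
Proof. by case/gensP=> _ sp i j hi hj; apply/implyP=> si; apply/implyP; exact: sp si. Qed.

Lemma seg_gens r (w : bool) : r + w < n -> seg r w \in gens.
Proof.
move=> hr; apply/gensP; split=> [|x y]; last by rewrite !in_seg; lia.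
have hr' : r < n by lia.
by exists (Ordinal hr'); rewrite in_seg /=; lia.
Qed.

Lemma gens_seg (s : {set 'I_n}) :
  s \in gens -> exists r (w : bool), r + w < n /\ s = seg r w.
Proof.
case/gensP=> -[x xs] sp.
have [/exists_inP [y ys /eqP yx]|/exists_inPn nx1] :=
  boolP [exists y in s, y == x.+1 :> nat].
  exists x, true; split; first by rewrite addn1 -yx ltn_ord.
  apply/setP=> z; rewrite in_seg; apply/idP/idP=> [zs|].
    by have := sp _ _ zs xs; have := sp _ _ ys zs; lia.
  by move=> zx; have [/val_inj ->|/val_inj ->] : (z : nat) = x \/ (z : nat) = y by lia.
have [/exists_inP [y ys /eqP yx]|/exists_inPn nx0] :=
  boolP [exists y in s, y.+1 == x :> nat].
  exists y, true; split; first by rewrite addn1 yx ltn_ord.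
  apply/setP=> z; rewrite in_seg; apply/idP/idP=> [zs|].
    by have := sp _ _ zs xs; have := sp _ _ xs zs; have := sp _ _ ys zs;
      have := nx1 z zs; lia.
  by move=> zy; have [/val_inj ->|/val_inj ->] : (z : nat) = y \/ (z : nat) = x by lia.
exists x, false; split; first by rewrite addn0 ltn_ord.
apply/setP=> z; rewrite in_seg; apply/idP/idP=> [zs|].
  by have := sp _ _ zs xs; have := sp _ _ xs zs; have := nx1 z zs;
    have := nx0 z zs; lia.
by move=> zx; have /val_inj -> : (z : nat) = x by lia.
Qed.

Lemma gens_neq0 (s : {set 'I_n}) : s \in gens -> s != set0.
Proof. by apply: contraTneq => ->; apply: set0_gens. Qed.

Lemma gens_mem (s : {set 'I_n}) (m : 'I_n) : s \in gens -> m \in s ->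
  [\/ s = seg m false, s = seg m true | 0 < m /\ s = seg m.-1 true].
Proof.
case/gens_seg=> r [u [_ ->]]; rewrite in_seg => ms.
have [[-> ->]|[[-> ->]|[m0 [-> ->]]]] : (r = m /\ u = false) \/ (r = m /\ u = true)
    \/ (0 < m /\ r = m.-1 /\ u = true) by case: u ms => /= ms; lia.
- exact: Or31.
- exact: Or32.
- exact: Or33.
Qed.

Lemma seg_adj r (w : bool) s (v : bool) : r + w < n -> s + v < n ->
  symdiff (seg r w) (seg s v) \in gens ->
  [|| ~~ w && ~~ v && ((r == s.+1) || (s == r.+1)),
      ~~ w && v && ((r == s) || (r == s.+1))
    | w && ~~ v && ((s == r) || (s == r.+1))].
Proof.
move=> hr hs rsG; have [[z zrs] _] := gensP _ rsG; move: zrs.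
have h1 : r < n by lia. have h3 : s < n by lia.
move: (gens_spread rsG) hr hs; case: w v {rsG} => [] [] sp /= hr hs;
  move: (sp _ _ h1 h3) (sp _ _ h3 h1).
- by move: (sp _ _ hr h3) (sp _ _ hs h1); rewrite !(in_symdiff, in_seg) /=; lia.
- by move: (sp _ _ h3 hr) (sp _ _ hr h3); rewrite !(in_symdiff, in_seg) /=; lia.
- by move: (sp _ _ h1 hs) (sp _ _ hs h1); rewrite !(in_symdiff, in_seg) /=; lia.
- by rewrite !(in_symdiff, in_seg) /=; lia.
Qed.

Lemma seg_inj r (w : bool) s (v : bool) : r + w < n -> s + v < n ->
  seg r w = seg s v -> r = s /\ w = v.
Proof.
move=> hr hs e; have h1 : r < n by lia. have h2 : r + w < n by lia.
have h3 : s < n by lia. have h4 : s + v < n by lia.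
have m x : (x \in seg r w) = (x \in seg s v) by rewrite e.
move: (m (Ordinal h1)) (m (Ordinal h2)) (m (Ordinal h3)) (m (Ordinal h4)).
by rewrite !in_seg /=; case: w v {e m hr hs h2 h4} => [] []; lia.
Qed.

Lemma card_gens : 2 * n - 1 <= #|gens|.
Proof.
pose f (k : 'I_(2 * n - 1)) := seg k./2 (odd k).
have fk (k : 'I_(2 * n - 1)) : k./2 + odd k < n.
  by have := ltn_ord k; have := odd_double_half k; lia.
have finj : injective f.
  move=> k l /(seg_inj (fk k) (fk l)) [kl okl]; apply/val_inj.
  by rewrite /= -(odd_double_half k) -(odd_double_half l) kl okl.
rewrite -[2 * n - 1]card_ord -(card_imset _ finj).
by apply/subset_leq_card/subsetP=> _ /imsetP [k _ ->]; apply: seg_gens.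
Qed.

End Segments.
Arguments seg {n}.

Section Neighbourhoods.
Variable n : nat.
Implicit Types a b c W : {set 'I_n}.

Definition nbh c : {set {set 'I_n}} := [set W | symdiff c W \in gens n].
Definition cnbh c : {set {set 'I_n}} := gens n :&: nbh c.
Definition common_nbh a b : {set {set 'I_n}} := gens n :&: nbh a :&: nbh b.
Definition path_nbh a b : {set {set 'I_n}} :=
  (nbh a :|: gens n :|: nbh b) :\: [set a; set0; b].

Lemma in_nbh c W : (W \in nbh c) = (symdiff c W \in gens n).
Proof. by rewrite !inE. Qed.

Lemma in_cnbh c W : (W \in cnbh c) = (W \in gens n) && (symdiff c W \in gens n).
Proof. by rewrite in_setI in_nbh. Qed.

Lemma in_common_nbh a b W : (W \in common_nbh a b) =
  [&& W \in gens n, symdiff a W \in gens n & symdiff b W \in gens n].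
Proof. by rewrite !in_setI -andbA !in_nbh. Qed.

Lemma common_nbhC a b : common_nbh a b = common_nbh b a.
Proof. by apply/setP=> W; rewrite !in_common_nbh (andbC (symdiff a W \in gens n)). Qed.

Lemma card_nbh c : #|nbh c| = #|gens n|.
Proof. exact: card_preimset (@symdiff_inj _ c). Qed.

Lemma card_nbhI a b : #|nbh a :&: nbh b| = #|cnbh (symdiff a b)|.
Proof.
rewrite -(card_preimset _ (@symdiff_inj _ a)); apply: eq_card => W.
by rewrite !inE symdiffKV symdiffA [symdiff b a]symdiffC.
Qed.

Lemma card_path_nbh a b :
  3 * #|gens n| + #|common_nbh a b| <=
  #|path_nbh a b| + 3 + #|cnbh a| + #|cnbh b| + #|cnbh (symdiff a b)|.
Proof.
have := cardsU3 (nbh a) (gens n) (nbh b).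
rewrite !card_nbh card_nbhI [nbh a :&: _]setIC.
rewrite -[gens n :&: nbh a :&: nbh b]/(common_nbh a b).
rewrite [#|path_nbh a b|]cardsD.
have : #|(nbh a :|: gens n :|: nbh b) :&: [set a; set0; b]| <= 3.
  apply: (card_le_size (s := [:: a; set0; b])) => x.
  by rewrite !inE => /andP [_]; rewrite -orbA.
by rewrite -/(cnbh a) -/(cnbh b); lia.
Qed.

End Neighbourhoods.

Section CommonNeighbours.
Variable n : nat.
Implicit Types a b c W : {set 'I_n}.
Local Notation last_single := (@seg n n.-1 false).

(* For m in c, W |-> c + W is an involution of [cnbh c] exchanging the
   members that contain m with those that do not. *)
Lemma cnbh_cover c (m : 'I_n) :
  m \in c -> #|cnbh c| <= 2 * #|[set W in cnbh c | m \in W]|.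
Proof.
move=> mc; set T := [set W in cnbh c | m \in W].
have cover : cnbh c \subset T :|: symdiff c @: T.
  apply/subsetP=> W WN; rewrite inE; have [mW|mW] := boolP (m \in W).
    by rewrite inE WN mW.
  apply/orP; right; apply/imsetP; exists (symdiff c W); last by rewrite symdiffKV.
  move: WN; rewrite !inE symdiffKV ?in_symdiff mc (negbTE mW) => /andP [-> ->].
  by rewrite andbT.
apply: leq_trans (subset_leq_card cover) _.
apply: leq_trans (leq_card_setU _ _).1 _.
by rewrite mul2n -addnn leq_add2l leq_imset_card.
Qed.

Lemma cnbh_le4 c : c != set0 -> #|cnbh c| <= 4.
Proof.
case/set0Pn=> x xc; case: (arg_minnP (fun y : 'I_n => y : nat) xc) => m mc mmin0.
have mmin y : y \in c -> m <= y := mmin0 y.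
set T := [set W in cnbh c | m \in W].
(* The generators containing m = min c are {m}, {m, m+1} and {m-1, m}; if the
   last one is a common neighbour then c = {m}, which excludes the first. *)
suff : #|T| <= 2 by have := cnbh_cover mc; rewrite -/T; lia.
have [/andP [m0 inT]|] := boolP ((0 < m) && (seg m.-1 true \in T)).
  have hm1 : m.-1 < n by have := ltn_ord m; lia.
  have c1 y : y \in c -> y = m.
    move=> yc; apply: val_inj => /=; apply/eqP; rewrite eqn_leq mmin // andbT.
    move: inT; rewrite inE in_cnbh => /andP [/andP [_ /gensP [_ sp]] _].
    rewrite leqNgt; apply/negP=> my; have := sp y (Ordinal hm1).
    move: (mmin (Ordinal hm1)); rewrite !(in_symdiff, in_seg) /= yc.
    by case: (Ordinal hm1 \in c); lia.
  apply: (card_le_size (s := [:: seg m true; seg m.-1 true])) => W.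
  rewrite inE in_cnbh => /andP [/andP [WG cW] mW].
  have [eW|->|[_ ->]] := gens_mem WG mW; rewrite !inE ?eqxx ?orbT //.
  suff : symdiff c W = set0 by move=> e; move: cW; rewrite e (negbTE (set0_gens _)).
  apply/setP=> y; rewrite in_symdiff eW in_seg in_set0 addn0 -eqn_leq.
  have [/c1 ->|ync] := boolP (y \in c); first by rewrite eqxx.
  suff -> : (m == y :> nat) = false by [].
  by apply: contraNF ync => /eqP /ord_inj <-.
move=> notmin; apply: (card_le_size (s := [:: seg m false; seg m true])) => W.
rewrite inE in_cnbh => /andP [/andP [WG cW] mW].
have [->|->|[m0 eW]] := gens_mem WG mW; rewrite ?inE ?eqxx ?orbT //.
by move: notmin; rewrite m0 inE in_cnbh -eW WG cW mW.
Qed.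

Lemma cnbh_seg_le2 r (w : bool) : r + w < n -> [|| w, r == 0 | r.+1 == n] ->
  #|cnbh (seg r w : {set 'I_n})| <= 2.
Proof.
move=> hr edge.
pose ps := if w then [:: (r, false); (r.+1, false)]
           else if r == 0 then [:: (1, false); (0, true)]
           else [:: (r.-1, false); (r.-1, true)].
apply: (@leq_trans (size [seq seg p.1 p.2 | p <- ps])); last first.
  by rewrite size_map /ps; case: ifP => //; case: ifP.
apply: card_le_size => W; rewrite in_cnbh.
case/andP=> /gens_seg [s [v [hs ->]]] /(seg_adj hr hs) adj.
apply: (map_f (fun p => seg p.1 p.2) (x := (s, v))).
rewrite /ps; clear ps.
by case: w v hr hs edge adj => [] [] /= hr hs edge adj; case: (r =P 0) => r0;
  rewrite !inE !xpair_eqE /= ?andbT ?andbF ?orbF; lia.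
Qed.

Lemma cnbh_singles_le2 p q : p < n -> q < n -> p != q -> p != q.+2 -> q != p.+2 ->
  #|cnbh (symdiff (seg p false) (seg q false) : {set 'I_n})| <= 2.
Proof.
wlog pq : p q / p < q.
  move=> gen pn qn; case: (ltngtP p q) => [lpq|lqp|_ //].
  - by move=> *; apply: gen => //; lia.
  - by rewrite symdiffC => *; apply: gen => //; lia.
move=> pn qn _ _ nq; set c := symdiff _ _.
have pc : Ordinal pn \in c by rewrite in_symdiff !in_seg /=; lia.
apply: leq_trans (cnbh_cover pc) _; rewrite -[X in _ <= X](muln1 2) leq_pmul2l //.
apply: (card_le_size (s := [:: seg p false])) => W.
rewrite inE in_cnbh => /andP [/andP [WG cW] pW].
have [->|eW|[/= p0 eW]] := gens_mem WG pW; first by rewrite inE.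
- exfalso; move: cW; rewrite eW => cG; have [[z]] := gensP _ cG.
  have p1 : p.+1 < n by lia.
  by have := gens_spread cG qn p1; rewrite /c !(in_symdiff, in_seg) /=; lia.
- exfalso; move: cW; rewrite eW => cG; have p1 : p.-1 < n by lia.
  by have := gens_spread cG qn p1; rewrite /c !(in_symdiff, in_seg) /=; lia.
Qed.

Lemma seg_common_nbh p : p.+2 < n ->
  seg p.+1 false \in common_nbh (seg p false) (seg p.+2 false : {set 'I_n}).
Proof.
move=> hp.
have e1 : symdiff (seg p false) (seg p.+1 false) = seg p true :> {set 'I_n}.
  by apply/setP=> x; rewrite in_symdiff !in_seg; lia.
have e2 : symdiff (seg p.+2 false) (seg p.+1 false) = seg p.+1 true :> {set 'I_n}.
  by apply/setP=> x; rewrite in_symdiff !in_seg; lia.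
by rewrite in_common_nbh e1 e2 !seg_gens //= ?addn0 ?addn1; lia.
Qed.

Lemma common_nbh_le1 a b : a \in gens n -> b \in gens n -> a != b ->
  #|common_nbh a b| <= 1.
Proof.
move=> aG bG ab; apply/card_le1_eqP => W W'.
rewrite !in_common_nbh => /and3P [WG Wa Wb] /and3P [W'G W'a W'b].
have [ra [wa [ha ea]]] := gens_seg aG; have [rb [wb [hb eb]]] := gens_seg bG.
have [r1 [w1 [h1 e1]]] := gens_seg WG; have [r2 [w2 [h2 e2]]] := gens_seg W'G.
subst a b W W'.
have ne : ~~ ((ra == rb) && (wa == wb)) by apply: contra ab => /andP [/eqP -> /eqP ->].
have R1 := seg_adj ha h1 Wa; have R2 := seg_adj hb h1 Wb.
have R3 := seg_adj ha h2 W'a; have R4 := seg_adj hb h2 W'b.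
suff [-> ->] : r1 = r2 /\ w1 = w2 by [].
by clear -R1 R2 R3 R4 ne; move: R1 R2 R3 R4 ne; case: w1 w2 wa wb => [] [] [] [] /=; lia.
Qed.

Lemma cnbh_gens_le4 c : c \in gens n -> #|cnbh c| <= 4.
Proof. by move/gens_neq0; apply: cnbh_le4. Qed.

Lemma cnbh_sum_le a b : a \in gens n -> b \in gens n -> a != b ->
  #|cnbh a| + #|cnbh b| + #|cnbh (symdiff a b)| <= 11 + #|common_nbh a b|.
Proof.
move=> aG bG ab.
have hab : #|cnbh (symdiff a b)| <= 4 by apply: cnbh_le4; rewrite symdiff_eq0.
have := cnbh_gens_le4 aG; have := cnbh_gens_le4 bG.
have [ra [wa [ha ea]]] := gens_seg aG; have [rb [wb [hb eb]]] := gens_seg bG.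
have [edge|] := boolP [|| wa, ra == 0 | ra.+1 == n].
  by have := cnbh_seg_le2 ha edge; rewrite -ea; lia.
have [edge|] := boolP [|| wb, rb == 0 | rb.+1 == n].
  by have := cnbh_seg_le2 hb edge; rewrite -eb; lia.
rewrite !negb_or => /and3P [/negbTE wa0 _ _] /and3P [/negbTE wb0 _ _].
move: ha hb ea eb; rewrite wa0 wb0 !addn0 => ha hb ea eb.
have rab : ra != rb by apply: contra ab => /eqP r; rewrite ea eb r.
have [near|far] := boolP ((ra == rb.+2) || (rb == ra.+2)); last first.
  by have := @cnbh_singles_le2 ra rb; rewrite -ea -eb; lia.
suff : 0 < #|common_nbh a b| by lia.
apply/card_gt0P; case/orP: near => /eqP r2.
- by exists (seg rb.+1 false); rewrite common_nbhC ea eb r2 seg_common_nbh //; lia.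
- by exists (seg ra.+1 false); rewrite ea eb r2 seg_common_nbh //; lia.
Qed.

Lemma cnbh_sum_le_last a : 0 < n -> a \in gens n -> a != last_single ->
  #|cnbh a| + #|cnbh last_single| + #|cnbh (symdiff a last_single)|
    <= 9 + #|common_nbh a last_single|.
Proof.
move=> n0 aG ab.
have hab : #|cnbh (symdiff a last_single)| <= 4 by apply: cnbh_le4; rewrite symdiff_eq0.
have := cnbh_gens_le4 aG.
have : #|cnbh last_single| <= 2.
  by apply: cnbh_seg_le2; rewrite ?prednK ?eqxx ?orbT //; lia.
have [ra [wa [ha ea]]] := gens_seg aG.
have [edge|] := boolP [|| wa, ra == 0 | ra.+1 == n].
  by have := cnbh_seg_le2 ha edge; rewrite -ea; lia.
rewrite !negb_or => /and3P [/negbTE wa0 _ ran].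
move: ha ea; rewrite wa0 addn0 => ha ea.
have [/eqP r2|far] := boolP (n.-1 == ra.+2); last first.
  by have := @cnbh_singles_le2 ra n.-1; rewrite -ea; lia.
suff : 0 < #|common_nbh a last_single| by lia.
by apply/card_gt0P; exists (seg ra.+1 false); rewrite ea r2 seg_common_nbh //; lia.
Qed.

Lemma path_nbh_card a b : a \in gens n -> b \in gens n -> a != b ->
  6 * n - 17 <= #|path_nbh a b|.
Proof.
move=> aG bG ab; have := card_path_nbh a b; have := cnbh_sum_le aG bG ab.
by have := card_gens n; lia.
Qed.

Lemma path_nbh_card_last a : 0 < n -> a \in gens n -> a != last_single ->
  6 * n - 15 <= #|path_nbh a last_single|.
Proof.
move=> n0 aG ab; have := card_path_nbh a last_single.
by have := cnbh_sum_le_last n0 aG ab; have := card_gens n; lia.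
Qed.

End CommonNeighbours.

Section Jumps.
Variable n : nat.
Implicit Types u v : vert n.

Definition bit v (j : nat) : bool := if insub j is Some k then v k else false.

Definition jumps v : {set 'I_n} := [set k : 'I_n | v k != bit v k.+1].

Definition xorv u v : vert n := [ffun k => u k != v k].

Lemma bit_ord v (k : 'I_n) : bit v k = v k.
Proof. by rewrite /bit valK. Qed.

Lemma bit_natv (P : pred nat) j : bit [ffun k : 'I_n => P k] j = (j < n) && P j.
Proof. by rewrite /bit; case: insubP => [k -> <-|/negbTE ->] //; rewrite ffunE. Qed.

Lemma bit_xorv u v j : bit (xorv u v) j = (bit u j != bit v j).
Proof. by rewrite /bit; case: insubP => // k _ _; rewrite ffunE. Qed.


Lemma bit_out v j : n <= j -> bit v j = false.
Proof. by move=> hj; rewrite /bit insubN // -leqNgt. Qed.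

Lemma bit_jumps v (k : 'I_n) : v k = ((k \in jumps v) != bit v k.+1).
Proof. by rewrite inE; case: (v k) (bit v k.+1) => [] []. Qed.

Lemma jumps_xorv u v : jumps (xorv u v) = symdiff (jumps u) (jumps v).
Proof.
apply/setP=> k; rewrite in_symdiff !inE ffunE bit_xorv.
by case: (u k) (v k) (bit u k.+1) (bit v k.+1) => [] [] [] [].
Qed.

Lemma xorvKV u v : xorv u (xorv u v) = v.
Proof. by apply/ffunP=> k; rewrite !ffunE; case: (u k) (v k) => [] []. Qed.

Lemma jumps_inj : injective jumps.
Proof.
move=> u v e.
have eb m j : n - j <= m -> bit u j = bit v j.
  elim: m j => [|m IH] j hj; first by rewrite !bit_out //; lia.
  have [jn|jn] := ltnP j n; last by rewrite !bit_out.
  by rewrite -[j]/(nat_of_ord (Ordinal jn)) !bit_ord !bit_jumps e IH //=; lia.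
by apply/ffunP=> k; rewrite -!bit_ord (eb (n - k)).
Qed.

Lemma jumps_bij : bijective jumps.
Proof.
apply: inj_card_bij jumps_inj _.
have chi_inj : injective (fun W : {set 'I_n} => [ffun k => k \in W] : vert n).
  by move=> A B /ffunP e; apply/setP=> x; have := e x; rewrite !ffunE.
exact: leq_card chi_inj.
Qed.

Definition unitv (i : nat) : vert n := [ffun k : 'I_n => k == i :> nat].
Definition prefv (i : nat) : vert n := [ffun k : 'I_n => k < i].

Lemma flip1E v i : 0 < i -> flip1 v i = xorv v (unitv i.-1).
Proof.
move=> i0; apply/ffunP=> k; rewrite !ffunE.
have -> : (k.+1 == i) = (k == i.-1 :> nat) by apply/eqP/eqP; lia.
by case: (k == i.-1 :> nat); case: (v k).
Qed.

Lemma flipLE v i : flipL v i = xorv v (prefv i).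
Proof. by apply/ffunP=> k; rewrite !ffunE; case: (_ <= _); case: (v k). Qed.

Lemma jumps_natv (P : pred nat) :
  jumps [ffun k : 'I_n => P k] = [set k : 'I_n | P k != (k.+1 < n) && P k.+1].
Proof. by apply/setP=> k; rewrite !inE ffunE bit_natv. Qed.

Lemma jumps_unitv i : 0 < i <= n -> jumps (unitv i.-1) = seg i.-2 (1 < i).
Proof.
move=> hi; rewrite /unitv (jumps_natv (eq_op^~ i.-1)); apply/setP=> k; rewrite !inE.
by case: i hi => [|[|i]] //= hi; lia.
Qed.

Lemma jumps_prefv i : 0 < i <= n -> jumps (prefv i) = seg i.-1 false.
Proof.
move=> hi; rewrite /prefv (jumps_natv (fun k => k < i)).
by apply/setP=> k; rewrite !inE; lia.
Qed.

Lemma aq_adjE u v : aq_adj u v = (symdiff (jumps u) (jumps v) \in gens n).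
Proof.
rewrite -jumps_xorv; apply/idP/idP.
  case/andP=> _ /orP [] /existsP [i /andP [hi /eqP ->]]; have hin := ltn_ord i.
    rewrite flip1E // xorvKV jumps_unitv ?seg_gens //; last by lia.
    by case: (nat_of_ord i) hi hin => [|[|j]] //=; lia.
  by rewrite flipLE xorvKV jumps_prefv ?seg_gens //; lia.
move=> dG; have [r [w [hrw ed]]] := gens_seg dG.
have uv : u != v.
  by apply: contraTneq dG => ->; rewrite jumps_xorv symdiffv (negbTE (set0_gens _)).
have veq d : jumps d = seg r w -> v = xorv u d.
  by move=> e; rewrite (jumps_inj (etrans e (esym ed))) xorvKV.
rewrite /aq_adj uv /=; apply/orP.
case: w hrw ed veq => [|] hrw ed veq.
  left; apply/existsP; have hi : r.+2 < n.+1 by lia.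
  exists (Ordinal hi); rewrite /= flip1E // (veq (unitv r.+1)) ?eqxx //.
  by apply: (jumps_unitv (i := r.+2)); lia.
case: r hrw ed veq => [|r] hrw ed veq.
  left; apply/existsP; have hi : 1 < n.+1 by lia.
  exists (Ordinal hi); rewrite /= flip1E // (veq (unitv 0)) ?eqxx //.
  by apply: (jumps_unitv (i := 1)); lia.
right; apply/existsP; have hi : r.+2 < n.+1 by lia.
exists (Ordinal hi); rewrite /= flipLE (veq (prefv r.+2)) ?eqxx //.
by apply: (jumps_prefv (i := r.+2)); lia.
Qed.
End Jumps.

Lemma in_nbr n (U V : vert n) : (V \in nbr U) = aq_adj U V.
Proof. by rewrite inE. Qed.

Section Relabel.
Variables (n : nat) (X : vert n).

Definition relabel (v : vert n) : {set 'I_n} := symdiff (jumps X) (jumps v).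

Lemma relabel_bij : bijective relabel.
Proof.
apply: bij_comp (@jumps_bij n).
exact: (Bijective (symdiffKV (jumps X)) (symdiffKV (jumps X))).
Qed.

Lemma relabel_adj u v : aq_adj u v = (symdiff (relabel u) (relabel v) \in gens n).
Proof. by rewrite aq_adjE symdiff_translate. Qed.

Lemma relabel_id : relabel X = set0.
Proof. exact: symdiffv. Qed.

Lemma relabel_flipL i : 0 < i <= n -> relabel (flipL X i) = seg i.-1 false.
Proof. by move=> hi; rewrite /relabel flipLE jumps_xorv symdiffKV jumps_prefv. Qed.

Lemma card_nbrS_path Y Z :
  #|nbrS [set Y; X; Z]| = #|path_nbh (relabel Y) (relabel Z)|.
Proof.
apply: (card_bij_eq relabel_bij) => v.
rewrite /nbrS !bigcup_setU !big_set1 /path_nbh !in_setD !in_setU !in_set1 !in_nbr !in_nbh.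
by rewrite !relabel_adj relabel_id symdiff0s -relabel_id !(inj_eq (bij_inj relabel_bij)).
Qed.

Lemma card_common_nbr Y Z :
  #|nbr X :&: nbr Y :&: nbr Z| = #|common_nbh (relabel Y) (relabel Z)|.
Proof.
apply: (card_bij_eq relabel_bij) => v.
by rewrite in_common_nbh !in_setI !in_nbr !relabel_adj relabel_id symdiff0s andbA.
Qed.

End Relabel.

Theorem lemma2p8 (n : nat) (X Y Z : vert n) :
  5 <= n ->
  aq_adj X Y -> aq_adj X Z -> Y != Z ->
  [/\ 6 * n - 17 <= #|nbrS [set Y; X; Z]|,
      #|nbr X :&: nbr Y :&: nbr Z| <= 1
    & Z = flipL X n -> 6 * n - 15 <= #|nbrS [set Y; X; Z]| ].
Proof.
move=> n5; rewrite !(relabel_adj X) relabel_id !symdiff0s => YG ZG YZ.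
have YZ' : relabel X Y != relabel X Z by rewrite (inj_eq (bij_inj (relabel_bij X))).
rewrite card_nbrS_path card_common_nbr; split.
- exact: path_nbh_card.
- exact: common_nbh_le1.
- move=> eZ; rewrite eZ relabel_flipL in YZ' *; last by lia.
  by apply: path_nbh_card_last; first by lia.
Qed.
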